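(* Let $C$ and $D$ be nonempty convex subsets of a real topological vector space $X$ such that $\operatorname{icr}(C\cap D)=\operatorname{fri}(C\cap D)$. Then: (i) if $C\cap\operatorname{fri} D\neq\emptyset$, then $\operatorname{fri}(C\cap D)\subseteq C\cap\operatorname{fri} D$; (ii) if $\operatorname{fri} C\cap\operatorname{fri} D\neq\emptyset$, then $\operatorname{fri}(C\cap D)\subseteq\operatorname{fri} C\cap\operatorname{fri} D$.
   Context: For a convex set $C$, a convex subset $F\subseteq C$ is a face of $C$ if for every $x\in F$ and all $y,z\in C$ with $x\in(y,z)=\{(1-t)y+tz:t\in(0,1)\}$ we have $y,z\in F$; $F_{\min}(x,C)$ is the intersection of all faces of $C$ containing $x\in C$. The intrinsic core is $\operatorname{icr} C=\{x\in C:\forall y\in C\ \exists z\in C,\ x\in(y,z)\}$ and the face relative interior is $\operatorname{fri} C=\{x\in C: C\subseteq\overline{F_{\min}(x,C)}\}$. *)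

From HB Require Import structures.
From mathcomp Require Import all_boot all_order all_algebra.
From mathcomp Require Import all_classical all_reals topology normedtype tvs.
Set Implicit Arguments. Unset Strict Implicit. Unset Printing Implicit Defensive.
Import Order.TTheory GRing.Theory Num.Theory.
Local Open Scope classical_set_scope.
Local Open Scope ring_scope.

Section ConvexDefs.
Variables (R : realType) (X : topologicalLmodType R).

Definition convex_set (C : set X) : Prop :=
  forall x y t, C x -> C y -> 0 <= t <= 1 -> C ((1 - t) *: x + t *: y).

Definition in_open_seg (x y z : X) : Prop :=
  exists t : R, 0 < t < 1 /\ x = (1 - t) *: y + t *: z.

Definition is_face (F C : set X) : Prop :=
  convex_set F /\ F `<=` C /\
  forall x y z, F x -> C y -> C z -> in_open_seg x y z -> F y /\ F z.

Definition Fmin (x : X) (C : set X) : set X :=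
  [set y | forall F, is_face F C -> F x -> F y].

Definition icr (C : set X) : set X :=
  [set x | C x /\ forall y, C y -> exists z, C z /\ in_open_seg x y z].

Definition fri (C : set X) : set X :=
  [set x | C x /\ C `<=` closure (Fmin x C)].

End ConvexDefs.

From HB Require Import structures.
From mathcomp Require Import all_boot all_order all_algebra.
From mathcomp Require Import all_classical all_reals topology normedtype tvs.
Set Implicit Arguments. Unset Strict Implicit. Unset Printing Implicit Defensive.
Local Open Scope classical_set_scope.

(* Let K be a subset of a set E and x a point of the intrinsic
   core of K.  For every y in K the point x lies in an open segment (y, z)
   with z in K, hence in E; so every face of E through x also contains y.
   Consequently the minimal face of E at y is contained in the minimal face
   of E at x, and if y lies in fri E (E is inside the closure of the former)
   then so does x.  Taking K = C ∩ D, the hypothesis fri K = icr K turns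
   every point of fri (C ∩ D) into an intrinsic-core point, and the
   nonemptiness assumptions provide the required y in K ∩ fri D (resp.
   K ∩ fri C). *)

Section FaceRelativeInterior.
Variables (R : realType) (X : topologicalLmodType R).
Implicit Types (K E F : set X) (x y : X).

Lemma face_icr_subset K E F x y :
  is_face F E -> K `<=` E -> icr K x -> F x -> K y -> F y.
Proof.
move=> [_ [_ faceF]] KE [_ icrKx] Fx Ky.
have [z [Kz xyz]] := icrKx y Ky.
by have [] := faceF x y z Fx (KE y Ky) (KE z Kz) xyz.
Qed.

Lemma Fmin_icr_subset K E x y :
  K `<=` E -> icr K x -> K y -> Fmin y E `<=` Fmin x E.
Proof.
move=> KE icrKx Ky w Fmin_yw F faceF Fx.
exact: Fmin_yw F faceF (face_icr_subset faceF KE icrKx Fx Ky).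
Qed.

Lemma fri_icr K E x y : K `<=` E -> icr K x -> K y -> fri E y -> fri E x.
Proof.
move=> KE icrKx Ky [_ E_closure_y]; split; first by case: icrKx => /KE.
exact: subset_trans E_closure_y (closureS (Fmin_icr_subset KE icrKx Ky)).
Qed.

Lemma fri_subset_fri K E :
  K `<=` E -> fri K `<=` icr K -> K `&` fri E !=set0 -> fri K `<=` fri E.
Proof.
move=> KE fri_icrK [y [Ky friEy]] x /fri_icrK icrKx.
exact: fri_icr KE icrKx Ky friEy.
Qed.

End FaceRelativeInterior.

Theorem proposition4p6 (R : realType) (X : topologicalLmodType R) (C D : set X) :
  convex_set C -> convex_set D -> C !=set0 -> D !=set0 ->
  icr (C `&` D) = fri (C `&` D) ->
  (C `&` fri D !=set0 -> fri (C `&` D) `<=` C `&` fri D) /\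
  (fri C `&` fri D !=set0 -> fri (C `&` D) `<=` fri C `&` fri D).
Proof.
move=> _ _ _ _ icr_fri.
have fri_icr : fri (C `&` D) `<=` icr (C `&` D) by rewrite icr_fri.
have CD_C : C `&` D `<=` C by move=> ? [].
have CD_D : C `&` D `<=` D by move=> ? [].
have friCD_C : fri (C `&` D) `<=` C by move=> x [/CD_C].
split.
- move=> [y [Cy [Dy friDy]]] x friCDx; split; first exact: friCD_C.
  apply: fri_subset_fri CD_D fri_icr _ x friCDx.
  by exists y; split=> //; split.
- move=> [y [[Cy friCy] [Dy friDy]]] x friCDx; split.
  + apply: fri_subset_fri CD_C fri_icr _ x friCDx.
    by exists y; split=> //; split.
  + apply: fri_subset_fri CD_D fri_icr _ x friCDx.
    by exists y; split=> //; split.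
Qed.
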